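(* Let $n \geq 1$ be a real number. Then for every complex number $z$ with $|z - 1/2| \leq 1/2$ we have $|z^n - 1| \geq |z - 1|$. Moreover, if $n > 1$ and $z \neq 0, 1$ (with $|z-1/2|\le 1/2$), then the inequality is strict: $|z^n - 1| > |z-1|$.
   Context: For real non-integer $n$, $z^n$ denotes the principal branch $z^n = e^{n \log z}$ with $\log$ the principal logarithm (argument in $(-\pi,\pi]$), and $0^n = 0$. *)

From Stdlib Require Import Reals.
From Coquelicot Require Import Coquelicot.
Open Scope R_scope.

(* Principal argument of z = x + i y, with values in (-PI, PI]; Arg 0 = 0. *)
Definition Arg (z : C) : R :=
  let x := fst z in let y := snd z in
  if Rlt_dec 0 x then atan (y / x)
  else if Rlt_dec x 0 then
    (if Rle_dec 0 y then atan (y / x) + PI else atan (y / x) - PI)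
  else if Rlt_dec 0 y then PI / 2
  else if Rlt_dec y 0 then - (PI / 2)
  else 0.

Definition CLog (z : C) : C := (ln (Cmod z), Arg z).

Definition CExp (w : C) : C := (exp (fst w) * cos (snd w), exp (fst w) * sin (snd w)).

Definition Cpowr (z : C) (a : R) : C :=
  if Ceq_dec z 0 then 0%C else CExp (Cmult (RtoC a) (CLog z)).

From Stdlib Require Import Reals Lra Psatz.
From Coquelicot Require Import Coquelicot.
Open Scope R_scope.

(* In the disk, z = r e^(ib) with |b| < PI/2 and 0 < r <= cos b, and
   |z^s - 1|^2 = r^(2s) - 2 r^s cos(sb) + 1; we compare s = 1 with s = n.
   While n|b| <= PI/2 this quantity is increasing in s: up to a positive factor its derivative
   is controlled by 1 - cos t <= t sin t and (1 + g) e^(-g) <= 1.  For PI/2 <= n|b| <= 3PI/2,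
   cos(nb) <= 0 already gives |z^n - 1| > 1 >= |z - 1|.  Beyond that n > 3, and r^n is small
   enough that (1 - r^n)^2 > 1 - r^2 >= |z - 1|^2. *)

Lemma le_of_is_derive_nonneg (f df : R -> R) (a b : R) :
  a <= b ->
  (forall x, a <= x <= b -> is_derive f x (df x)) ->
  (forall x, a <= x <= b -> 0 <= df x) -> f a <= f b.
Proof.
intros hab hf hdf.
destruct (MVT_gen f a b df) as [c [hc E]];
  rewrite ?Rmin_left, ?Rmax_right in * by lra.
- intros x hx; apply hf; lra.
- intros x hx; apply continuity_pt_filterlim, (ex_derive_continuous f x).
  exists (df x); apply hf, hx.
- pose proof (hdf c hc); nra.
Qed.

Lemma one_sub_cos_le_mul_sin t : - PI / 2 <= t <= PI / 2 -> 1 - cos t <= t * sin t.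
Proof.
assert (Hpos : forall u, 0 <= u <= PI / 2 -> 1 - cos u <= u * sin u).
{ intros u hu.
  pose proof (le_of_is_derive_nonneg (fun s => s * sin s + cos s) (fun s => s * cos s) 0 u)
    as Hmono; cbv beta in Hmono; rewrite sin_0, cos_0 in Hmono.
  enough (0 * 0 + 1 <= u * sin u + cos u) by lra.
  apply Hmono; [lra | |].
  - intros x _; auto_derive; [easy | ring].
  - intros x hx; apply Rmult_le_pos; [lra | apply cos_ge_0; lra]. }
intros ht; destruct (Rle_dec 0 t); [apply Hpos; lra |].
rewrite <- cos_neg; replace (t * sin t) with (- t * sin (- t)) by (rewrite sin_neg; ring).
apply Hpos; lra.
Qed.

Lemma cos_le_taylor4 a : - PI / 2 <= a <= PI / 2 -> cos a <= 1 - a ^ 2 / 2 + a ^ 4 / 24.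
Proof.
intros [ha hb]; pose proof PI_4.
assert (a ^ 2 <= 56) by nra.
destruct (COS a ha hb) as [_ Hub].
unfold cos_ub, cos_approx, cos_term in Hub; cbn [sum_f_R0] in Hub.
rewrite !INR_IZR_INZ in Hub; change (Z.of_nat (Factorial.fact (2 * 4))) with 40320%Z in Hub.
cbn -[pow IZR] in Hub.
nra.
Qed.

Lemma ln_cos_le p : 0 <= p <= PI / 3 -> ln (cos p) <= - (2 / 5) * p ^ 2.
Proof.
intros hp; pose proof PI_4; pose proof PI_RGT_0.
assert (hc : 0 < cos p) by (apply cos_gt_0; lra).
assert (ln (cos p) <= cos p - 1).
{ rewrite <- (ln_exp (cos p - 1)); apply ln_le; [exact hc |].
  pose proof (exp_ineq1_le (cos p - 1)); lra. }
pose proof (cos_le_taylor4 p ltac:(lra)).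
assert (p ^ 2 <= 16 / 9) by nra.
nra.
Qed.

Definition pow_dist2 (L b s : R) : R :=
  (exp (s * L) * cos (s * b) - 1) ^ 2 + (exp (s * L) * sin (s * b)) ^ 2.

Lemma pow_dist2_expand L b s :
  pow_dist2 L b s = exp (s * L) ^ 2 - 2 * exp (s * L) * cos (s * b) + 1.
Proof.
unfold pow_dist2; pose proof (sin2_cos2 (s * b)) as E; unfold Rsqr in E; nra.
Qed.

Lemma pow_dist2_nonneg L b s : 0 <= pow_dist2 L b s.
Proof. unfold pow_dist2; apply Rplus_le_le_0_compat; apply pow2_ge_0. Qed.

Lemma pow_dist2_ge L b s : (1 - exp (s * L)) ^ 2 <= pow_dist2 L b s.
Proof.
rewrite pow_dist2_expand; pose proof (COS_bound (s * b)); pose proof (exp_pos (s * L)); nra.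
Qed.

Lemma is_derive_pow_dist2 L b s :
  is_derive (pow_dist2 L b) s
    (2 * exp (s * L) * (L * exp (s * L) - L * cos (s * b) + b * sin (s * b))).
Proof.
apply (is_derive_ext (fun s => exp (s * L) ^ 2 - 2 * exp (s * L) * cos (s * b) + 1)).
- intros t; symmetry; apply pow_dist2_expand.
- auto_derive; [easy | ring].
Qed.

(* With g = -sL and t = sb, the bracket times s is g cos t - g e^(-g) + t sin t; multiplying by
   1 + g and using (1 + g) e^(-g) <= 1 and 1 - cos t <= t sin t leaves g^2 cos t + 1 - cos t. *)
Lemma pow_dist2_derive_factor_pos L b s :
  L < 0 -> 0 < s -> Rabs (s * b) <= PI / 2 ->
  0 < L * exp (s * L) - L * cos (s * b) + b * sin (s * b).
Proof.
intros hL hs hb.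
assert (hg : 0 < - (s * L)) by nra.
assert (ht : - PI / 2 <= s * b <= PI / 2) by (apply Rabs_le_between in hb; lra).
assert (hcos : 0 <= cos (s * b) <= 1) by (split; [apply cos_ge_0 | apply COS_bound]; lra).
pose proof (one_sub_cos_le_mul_sin (s * b) ht) as Hts.
assert (Hexp : exp (s * L) * (1 - s * L) <= 1).
{ replace 1 with (exp (s * L) * exp (- (s * L))) at 2
    by (rewrite <- exp_plus, Rplus_opp_r; apply exp_0).
  apply Rmult_le_compat_l; [apply Rlt_le, exp_pos | apply exp_ineq1_le]. }
assert (Hg2 : 0 < (s * L) ^ 2 * cos (s * b) + 1 - cos (s * b)).
{ assert (0 <= (s * L) ^ 2 * cos (s * b)) by (apply Rmult_le_pos; [apply pow2_ge_0 | lra]).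
  destruct (Rlt_or_le (cos (s * b)) 1); [lra |].
  replace (cos (s * b)) with 1 by lra; nra. }
pose proof (exp_pos (s * L)).
apply (Rmult_lt_reg_l s); [exact hs |].
apply (Rmult_lt_reg_r (1 - s * L)); [lra |].
nra.
Qed.

Lemma pow_dist2_lt_small_angle L b n :
  L < 0 -> 1 < n -> n * Rabs b <= PI / 2 -> pow_dist2 L b 1 < pow_dist2 L b n.
Proof.
intros hL hn hb.
apply (incr_function_le _ 1 n
  (fun s => 2 * exp (s * L) * (L * exp (s * L) - L * cos (s * b) + b * sin (s * b))));
  simpl; try lra.
- intros s _ _; apply is_derive_pow_dist2.
- intros s hs1 hsn.
  apply Rmult_lt_0_compat; [pose proof (exp_pos (s * L)); lra |].
  apply pow_dist2_derive_factor_pos; [lra | lra |].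
  rewrite Rabs_mult, Rabs_right by lra; pose proof (Rabs_pos b); nra.
Qed.

Lemma pow_dist2_1_le r b : 0 < r -> r <= cos b -> pow_dist2 (ln r) b 1 <= 1 - r ^ 2.
Proof.
intros hr hc; rewrite pow_dist2_expand, !Rmult_1_l, exp_ln by exact hr; nra.
Qed.

Lemma pow_dist2_lt_mid_angle r b n :
  0 < r -> r <= cos b -> PI / 2 <= n * Rabs b <= 3 * (PI / 2) ->
  pow_dist2 (ln r) b 1 < pow_dist2 (ln r) b n.
Proof.
intros hr hc hnb.
assert (cos (n * b) <= 0).
{ unfold Rabs in hnb; destruct Rcase_abs in hnb; [rewrite <- cos_neg |];
    apply cos_le_0; lra. }
pose proof (pow_dist2_1_le r b hr hc); pose proof (exp_pos (n * ln r)).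
rewrite pow_dist2_expand with (s := n); nra.
Qed.

(* cos p ^ n (1 + sin p) < cos p ^ 2 * exp ((n - 2) ln (cos p) + p), and the exponent is negative
   because ln (cos p) <= -2p^2/5 while (n - 2) p > 3PI/2 - 2PI/3 > 5/2. *)
Lemma exp_mul_ln_cos_lt p n :
  0 < p <= PI / 3 -> 3 * (PI / 2) < n * p ->
  exp (n * ln (cos p)) * (1 + sin p) < cos p ^ 2.
Proof.
intros hp hnp; pose proof PI_4; pose proof PI_RGT_0; pose proof PI2_3_2.
assert (hc : 0 < cos p) by (apply cos_gt_0; lra).
pose proof (ln_cos_le p ltac:(lra)) as hL.
assert (hn : (n - 2) * p > 5 / 2) by nra.
assert (hexp : exp ((n - 2) * ln (cos p) + p) < 1).
{ assert (n - 2 > 0) by nra.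
  assert ((n - 2) * ln (cos p) <= - (2 / 5) * p * ((n - 2) * p)) by nra.
  rewrite <- exp_0; apply exp_increasing; nra. }
assert (hsin : 1 + sin p < exp p) by (pose proof (sin_lt_x p); pose proof (exp_ineq1_le p); lra).
replace (exp (n * ln (cos p))) with (cos p ^ 2 * exp ((n - 2) * ln (cos p))).
- rewrite exp_plus in hexp; pose proof (exp_pos ((n - 2) * ln (cos p))).
  assert (0 < cos p ^ 2) by nra.
  apply Rlt_le_trans with (cos p ^ 2 * exp ((n - 2) * ln (cos p)) * exp p); [|nra].
  apply Rmult_lt_compat_l; [nra | lra].
- replace (n * ln (cos p)) with (ln (cos p) + ln (cos p) + (n - 2) * ln (cos p)) by ring.
  rewrite !exp_plus, exp_ln by exact hc; ring.
Qed.

Lemma le_of_cos_le x y : 0 <= x <= PI -> 0 <= y <= PI -> cos x <= cos y -> y <= x.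
Proof.
intros hx hy hc; destruct (Rle_or_lt y x) as [| hxy]; [assumption |].
pose proof (cos_decreasing_1 x y ltac:(lra) ltac:(lra) ltac:(lra) ltac:(lra) hxy); lra.
Qed.

Lemma exp_mul_ln_lt_one_sub_sqrt r b n :
  0 < r < 1 -> r <= cos b -> Rabs b < PI / 2 -> 3 * (PI / 2) < n * Rabs b ->
  exp (n * ln r) < 1 - sqrt (1 - r ^ 2).
Proof.
intros hr hc hb hnb; pose proof PI_4; pose proof PI2_3_2; pose proof (Rabs_pos b).
set (S := sqrt (1 - r ^ 2)).
assert (hS : S * S = 1 - r ^ 2) by (apply sqrt_sqrt; nra).
assert (hS0 : 0 <= S) by apply sqrt_pos.
(* (1 - S) (1 + S) = r^2; for r > 1/2 write r = cos p, so that |b| <= p <= PI/3. *)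
enough (exp (n * ln r) * (1 + S) < r ^ 2) by nra.
destruct (Rle_lt_dec r (1 / 2)) as [hr2 | hr2].
- assert (hn : 3 < n) by nra.
  assert (exp (n * ln r) < r ^ 3).
  { replace (r ^ 3) with (exp (3 * ln r))
      by (replace (3 * ln r) with (ln r + ln r + ln r) by ring;
          rewrite !exp_plus, exp_ln by lra; ring).
    apply exp_increasing.
    assert (ln r < 0) by (rewrite <- ln_1; apply ln_increasing; lra); nra. }
  assert (S <= 1) by nra.
  pose proof (exp_pos (n * ln r)); nra.
- set (p := acos r).
  assert (hr1 : -1 <= r <= 1) by lra.
  assert (hcp : cos p = r) by apply cos_acos, hr1.
  assert (hsp : sin p = S)
    by (unfold p, S; rewrite sin_acos by exact hr1; unfold Rsqr; f_equal; ring).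
  pose proof (acos_bound_lt r ltac:(lra)) as hp; fold p in hp.
  assert (p <= PI / 3) by (apply le_of_cos_le; [lra | lra | rewrite cos_PI3; lra]).
  assert (Rabs b <= p).
  { apply le_of_cos_le; [lra | lra |].
    rewrite hcp; unfold Rabs; destruct Rcase_abs; [rewrite cos_neg |]; lra. }
  rewrite <- hcp, <- hsp; apply exp_mul_ln_cos_lt; nra.
Qed.

Lemma pow_dist2_lt_large_angle r b n :
  0 < r < 1 -> r <= cos b -> Rabs b < PI / 2 -> 3 * (PI / 2) < n * Rabs b ->
  pow_dist2 (ln r) b 1 < pow_dist2 (ln r) b n.
Proof.
intros hr hc hb hnb.
pose proof (exp_mul_ln_lt_one_sub_sqrt r b n hr hc hb hnb) as he.
pose proof (sqrt_pos (1 - r ^ 2)); pose proof (sqrt_sqrt (1 - r ^ 2) ltac:(nra)).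
pose proof (pow_dist2_1_le r b ltac:(lra) hc); pose proof (pow_dist2_ge (ln r) b n).
assert (sqrt (1 - r ^ 2) < 1 - exp (n * ln r)) by lra.
nra.
Qed.

Lemma pow_dist2_lt r b n :
  0 < r < 1 -> r <= cos b -> Rabs b < PI / 2 -> 1 < n ->
  pow_dist2 (ln r) b 1 < pow_dist2 (ln r) b n.
Proof.
intros hr hc hb hn.
destruct (Rle_lt_dec (n * Rabs b) (PI / 2)).
- apply pow_dist2_lt_small_angle; [rewrite <- ln_1; apply ln_increasing | |]; lra.
- destruct (Rle_lt_dec (n * Rabs b) (3 * (PI / 2))).
  + apply pow_dist2_lt_mid_angle; lra.
  + apply pow_dist2_lt_large_angle; assumption.
Qed.

Lemma Cmod_sqr (z : C) : Cmod z ^ 2 = fst z ^ 2 + snd z ^ 2.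
Proof. apply pow2_sqrt; nra. Qed.

Lemma Cmod_pos_of_fst_pos (z : C) : 0 < fst z -> 0 < Cmod z.
Proof. intros hx; apply Cmod_gt_0; intros ->; simpl in hx; lra. Qed.

Lemma cos_sin_atan_div (z : C) : 0 < fst z ->
  cos (atan (snd z / fst z)) = fst z / Cmod z /\ sin (atan (snd z / fst z)) = snd z / Cmod z.
Proof.
intros hx; pose proof (Cmod_pos_of_fst_pos z hx); pose proof (Cmod_sqr z) as hr2.
assert (E : sqrt (1 + (snd z / fst z)²) = Cmod z / fst z).
{ rewrite <- (sqrt_Rsqr (Cmod z / fst z)) by (apply Rlt_le, Rdiv_lt_0_compat; lra).
  f_equal; unfold Rsqr; field_simplify; [| lra | lra]. rewrite hr2; field; lra. }
rewrite cos_atan, sin_atan, E; split; field; lra.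
Qed.

Lemma Cpowr_polar (z : C) (s : R) : 0 < fst z ->
  Cpowr z s = (exp (s * ln (Cmod z)) * cos (s * atan (snd z / fst z)),
               exp (s * ln (Cmod z)) * sin (s * atan (snd z / fst z))).
Proof.
intros hx; unfold Cpowr; destruct (Ceq_dec z 0) as [-> | _]; [simpl in hx; lra |].
unfold CExp, CLog, Arg, Cmult, RtoC; simpl.
destruct (Rlt_dec 0 (fst z)) as [_ | ?]; [| lra].
f_equal; f_equal; f_equal; ring.
Qed.

Lemma Cmod_Cpowr_sub1 (z : C) (s : R) : 0 < fst z ->
  Cmod (Cminus (Cpowr z s) 1) = sqrt (pow_dist2 (ln (Cmod z)) (atan (snd z / fst z)) s).
Proof.
intros hx; rewrite Cpowr_polar by exact hx.
unfold Cmod, pow_dist2; simpl; f_equal; ring.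
Qed.

Lemma Cpowr_1_r (z : C) : 0 < fst z -> Cpowr z 1 = z.
Proof.
intros hx; destruct (cos_sin_atan_div z hx) as [hc hs]; pose proof (Cmod_pos_of_fst_pos z hx).
rewrite Cpowr_polar, !Rmult_1_l, exp_ln, hc, hs by assumption.
destruct z as [x y]; simpl; f_equal; field; lra.
Qed.

Lemma Cpowr_0_l (s : R) : Cpowr 0 s = 0.
Proof. unfold Cpowr; destruct (Ceq_dec 0 0); [reflexivity | congruence]. Qed.

Lemma Cpowr_1_l (s : R) : Cpowr 1 s = 1.
Proof.
rewrite Cpowr_polar by (simpl; lra).
replace (Cmod 1) with 1 by (symmetry; apply Cmod_1).
simpl; rewrite Rdiv_0_l, atan_0, ln_1, !Rmult_0_r, exp_0, cos_0, sin_0.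
unfold RtoC; f_equal; ring.
Qed.

Lemma closed_disk_polar (z : C) :
  Cmod (Cminus z (RtoC (1 / 2))) <= 1 / 2 -> z <> 0 -> z <> 1 ->
  0 < fst z /\ 0 < Cmod z < 1 /\ Cmod z <= cos (atan (snd z / fst z)) /\
  Rabs (atan (snd z / fst z)) < PI / 2.
Proof.
intros hD hz0 hz1.
assert (hq : (fst z - 1 / 2) ^ 2 + snd z ^ 2 <= 1 / 4).
{ pose proof (Cmod_sqr (Cminus z (RtoC (1 / 2)))).
  pose proof (Cmod_ge_0 (Cminus z (RtoC (1 / 2)))).
  simpl in *; nra. }
assert (hr : 0 < Cmod z) by (apply Cmod_gt_0, hz0).
pose proof (Cmod_sqr z) as hr2.
assert (hx : 0 < fst z) by nra.
destruct (cos_sin_atan_div z hx) as [hc _].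
assert (hr1 : Cmod z < 1).
{ destruct (Rlt_or_le (Cmod z) 1) as [| h1]; [assumption |].
  exfalso; apply hz1; destruct z as [x y]; simpl in *.
  assert (x = 1) by nra; assert (y = 0) by nra; subst; reflexivity. }
repeat split; try assumption.
- rewrite hc; apply (Rmult_le_reg_r (Cmod z)); [exact hr |].
  unfold Rdiv; rewrite Rmult_assoc, Rinv_l by lra; nra.
- apply Rabs_def1; pose proof (atan_bound (snd z / fst z)); lra.
Qed.

Theorem mainTheorem1 (n : R) (Hn : 1 <= n) :
  (forall z : C, Cmod (Cminus z (RtoC (1/2))) <= 1/2 ->
     Cmod (Cminus z 1%C) <= Cmod (Cminus (Cpowr z n) 1%C)) /\
  (1 < n -> forall z : C, Cmod (Cminus z (RtoC (1/2))) <= 1/2 ->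
     z <> 0%C -> z <> 1%C ->
     Cmod (Cminus z 1%C) < Cmod (Cminus (Cpowr z n) 1%C)).
Proof.
assert (Hstrict : 1 < n -> forall z : C, Cmod (Cminus z (RtoC (1/2))) <= 1/2 ->
          z <> 0%C -> z <> 1%C -> Cmod (Cminus z 1%C) < Cmod (Cminus (Cpowr z n) 1%C)).
{ intros hn z hD hz0 hz1.
  destruct (closed_disk_polar z hD hz0 hz1) as [hx [hr [hc hb]]].
  rewrite <- (Cpowr_1_r z hx) at 1; rewrite !Cmod_Cpowr_sub1 by exact hx.
  apply sqrt_lt_1_alt; split; [apply pow_dist2_nonneg | apply pow_dist2_lt; assumption]. }
split; [| exact Hstrict].
intros z hD.
destruct (Ceq_dec z 0) as [-> | hz0]; [rewrite Cpowr_0_l; lra |].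
destruct (Ceq_dec z 1) as [-> | hz1]; [rewrite Cpowr_1_l; lra |].
destruct (Rle_lt_or_eq_dec 1 n Hn) as [hn | <-].
- apply Rlt_le, Hstrict; assumption.
- rewrite Cpowr_1_r; [lra | apply (closed_disk_polar z hD hz0 hz1)].
Qed.
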